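(* Let $(M,w)$ be a pointed restricted Kripke model and $(U,s)$ a pointed atemporal action model over $L_{\mathsf{YDEL}}$ with $M,w\models_{\mathsf{YDEL}}\mathrm{pre}^U(s)$. Then the function $f:W^M\to W^{M\oplus U}$ defined by $f(v)=(v,\flat)$ is a bisimulation between $M$ and $M\oplus U$.
   Context: Fix a nonempty finite set $\mathsf{Agt}$ of agents and a nonempty set $\mathsf{Prop}$ of letters. A Kripke model (with yesterday) is $M=(W^M,(\to^M_a)_{a\in\mathsf{Agt}},\leadsto^M,V^M)$: $W^M$ a nonempty set, binary relations $\to^M_a,\leadsto^M$ on $W^M$ ($w'\leadsto w$: $w'$ is a yesterday of $w$), $V^M:\mathsf{Prop}\to\mathcal P(W^M)$. A progression is a finite nonempty sequence $x_0,\dots,x_n$ with $x_i\leadsto x_{i+1}$; a history is one not extendable at its beginning; $\mathrm{depth}(x)$ is the maximal length $n$ of a history ending at $x$ ($\infty$ if none). $M$ is restricted if: $w\leadsto w'$ implies $w\in V(p)\iff w'\in V(p)$; all depths finite; $w'\leadsto w\to_av$ implies $\exists v'\leadsto v$; $w\to_av$ and no $w'\leadsto w$ imply no $v'\leadsto v$; $w'\leadsto w$, $w''\leadsto w$ imply $w'=w''$; $w\leadsto v\to_av'$ implies $\exists w'$ with $w\to_aw'\leadsto v'$. An action model over a set of formulas $F$ is $U=(W^U,(\to^U_a)_a,\leadsto^U,\mathrm{pre}^U)$ with $W^U$ nonempty finite, binary relations, $\mathrm{pre}^U:W^U\to F$; it is atemporal if $\leadsto^U=\emptyset$. $L_{\mathsf{YDEL}}$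 is given by $\varphi::=p\mid\neg\varphi\mid\varphi\wedge\varphi\mid\Box_a\varphi\mid[Y]\varphi\mid[U,s]\varphi$ where $(U,s)$ ranges over pointed atemporal action models over $L_{\mathsf{YDEL}}$; $\flat$ is a special symbol never used as a world or event. $\mathsf{YDEL}$ semantics on pointed restricted models: Boolean standard; $M,w\models_{\mathsf{YDEL}}\Box_a\varphi$ iff $\varphi$ holds at all $v$ with $w\to^M_av$; $M,w\models_{\mathsf{YDEL}}[Y]\varphi$ iff $\varphi$ holds at all $v\leadsto^Mw$; $M,w\models_{\mathsf{YDEL}}[U,s]\varphi$ iff $M,w\models_{\mathsf{YDEL}}\mathrm{pre}^U(s)$ implies $M\oplus U,(w,s)\models_{\mathsf{YDEL}}\varphi$, where $W^{M\oplus U}=(W^M\times\{\flat\})\cup\{(v,t)\in W^M\times W^U:M,v\models_{\mathsf{YDEL}}\mathrm{pre}^U(t)\}$; $(v,t)\to_a(v',t')$ iff ($t,t'\ne\flat$, $v\to^M_av'$, $t\to^U_at'$) or ($t=t'=\flat$ and $v\to^M_av'$); $(v,t)\leadsto(v',t')$ iff ($t=\flat$, $t'\ne\flat$, $v=v'$) or ($t=t'=\flat$ and $v\leadsto^Mv'$); $(v,t)\in V(p)$ iff $v\in V^M(p)$. A bisimulation between Kripke models $M,M'$ is a nonempty relation $B\subseteq W^M\times W^{M'}$ such that $wBw'$ implies $w,w'$ satisfy the same letters, and for each relation $R$ among the $\to_a$ ($a\in\mathsf{Agt}$) and the converse of $\leadsto$ (i.e. $w\,R\,v$ iff $v\leadsto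 w$): if $wBw'$ and $wR^Mv$ then there is $v'$ with $w'R^{M'}v'$ and $vBv'$, and if $wBw'$ and $w'R^{M'}v'$ then there is $v$ with $wR^Mv$ and $vBv'$. A function is a bisimulation if its graph is. *)

From mathcomp Require Import all_boot.
Set Implicit Arguments.
Unset Strict Implicit.
Unset Printing Implicit Defensive.

Section YDEL.
Variables (Agt : finType) (Letter : Type).

(** A pointed atemporal action model (U,s) is given by
    its number of events [n.+1] (events are ['I_n.+1], so W^U is nonempty and
    finite), its agent relations [R a], its precondition map [pre] and the
    designated event [s]; its yesterday relation is empty (atemporal), so it
    is not represented. *)
Inductive form : Type :=
| Var : Letter -> form
| Neg : form -> form
| And : form -> form -> form
| Box : Agt -> form -> form
| Yest : form -> form
| Act : forall n : nat, (Agt -> 'I_n.+1 -> 'I_n.+1 -> Prop) ->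
        ('I_n.+1 -> form) -> 'I_n.+1 -> form -> form.

(** Kripke models with yesterday. [yest x y] means "x is a yesterday of y". *)
Record kmodel : Type := KModel {
  world :> Type;
  world_inh : inhabited world;
  krel : Agt -> world -> world -> Prop;
  kyest : world -> world -> Prop;
  kval : Letter -> world -> Prop }.
Arguments krel : clear implicits.
Arguments kyest : clear implicits.
Arguments kval : clear implicits.
Arguments world_inh : clear implicits.

Definition progression (M : kmodel) (n : nat) (p : nat -> M) : Prop :=
  forall i, i < n -> kyest M (p i) (p i.+1).

Definition history (M : kmodel) (n : nat) (p : nat -> M) : Prop :=
  progression n p /\ ~ (exists y, kyest M y (p 0)).

Definition finite_depth (M : kmodel) (x : M) : Prop :=
  exists n, (exists p, history n p /\ p n = x) /\
            (forall m p, history m p -> p m = x -> m <= n).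

Definition restricted (M : kmodel) : Prop :=
  (forall w w' p, kyest M w w' -> (kval M p w <-> kval M p w')) /\
      (forall x : M, finite_depth x) /\
      (forall a (w' w v : M), kyest M w' w -> krel M a w v ->
          exists v', kyest M v' v) /\
      (forall a (w v : M), krel M a w v -> ~ (exists w', kyest M w' w) ->
          ~ (exists v', kyest M v' v)) /\
      (forall (w' w'' w : M), kyest M w' w -> kyest M w'' w -> w' = w'') /\
      (forall a (w v v' : M), kyest M w v -> krel M a v v' ->
          exists w', krel M a w w' /\ kyest M w' v').

(** Product update M (+) U, where [P t v] stands for "M,v |= pre^U(t)".
    Worlds are pairs (v,t) with t : option 'I_n.+1; [None] is the symbol flat. *)
Definition upd_world (M : kmodel) (n : nat) (P : 'I_n.+1 -> M -> Prop) :=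
  {x : M * option 'I_n.+1 |
     match x.2 with None => True | Some t => P t x.1 end}.

Definition upd_rel (M : kmodel) (n : nat) (R : Agt -> 'I_n.+1 -> 'I_n.+1 -> Prop)
  (P : 'I_n.+1 -> M -> Prop) (a : Agt) (x y : upd_world P) : Prop :=
  match (sval x).2, (sval y).2 with
  | Some t, Some t' => krel M a (sval x).1 (sval y).1 /\ R a t t'
  | None, None => krel M a (sval x).1 (sval y).1
  | _, _ => False
  end.

Definition upd_yest (M : kmodel) (n : nat) (P : 'I_n.+1 -> M -> Prop)
  (x y : upd_world P) : Prop :=
  match (sval x).2, (sval y).2 with
  | None, Some _ => (sval x).1 = (sval y).1
  | None, None => kyest M (sval x).1 (sval y).1
  | _, _ => False
  end.

Definition upd_inh (M : kmodel) (n : nat) (P : 'I_n.+1 -> M -> Prop) :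
  inhabited (upd_world P) :=
  match world_inh M with
  | inhabits v => inhabits (exist (fun x : M * option 'I_n.+1 =>
        match x.2 with None => True | Some t => P t x.1 end) (v, None) I)
  end.

Definition prodM (M : kmodel) (n : nat) (R : Agt -> 'I_n.+1 -> 'I_n.+1 -> Prop)
  (P : 'I_n.+1 -> M -> Prop) : kmodel :=
  @KModel (upd_world P) (@upd_inh M n P) (@upd_rel M n R P) (@upd_yest M n P)
          (fun p x => kval M p (sval x).1).

Unset Implicit Arguments.
Fixpoint sat (phi : form) : forall M : kmodel, M -> Prop :=
  match phi with
  | Var p => fun (M : kmodel) (w : M) => kval M p w
  | Neg f => fun (M : kmodel) (w : M) => ~ sat f M w
  | And f g => fun (M : kmodel) (w : M) => sat f M w /\ sat g M w
  | Box a f => fun (M : kmodel) (w : M) => forall v, krel M a w v -> sat f M v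
  | Yest f => fun (M : kmodel) (w : M) => forall v, kyest M v w -> sat f M v
  | Act n R pre s f => fun (M : kmodel) (w : M) =>
      forall H : sat (pre s) M w,
      sat f (prodM R (fun t v => sat (pre t) M v))
            (exist (fun x : M * option 'I_n.+1 =>
               match x.2 with None => True | Some t => sat (pre t) M x.1 end)
               (w, Some s) H)
  end.

Set Implicit Arguments.
Definition update (M : kmodel) (n : nat) (R : Agt -> 'I_n.+1 -> 'I_n.+1 -> Prop)
  (pre : 'I_n.+1 -> form) : kmodel :=
  prodM R (fun t v => sat (pre t) M v).

Definition flat_world (M : kmodel) (n : nat) (R : Agt -> 'I_n.+1 -> 'I_n.+1 -> Prop)
  (pre : 'I_n.+1 -> form) (v : M) : update M R pre :=
  exist (fun x : M * option 'I_n.+1 =>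
           match x.2 with None => True | Some t => sat (pre t) M x.1 end)
        (v, None) I.

Definition bisimulation (M M' : kmodel) (B : M -> M' -> Prop) : Prop :=
  (exists w w', B w w') /\
      (forall w w', B w w' -> forall p, kval M p w <-> kval M' p w') /\
      (forall a w w' v, B w w' -> krel M a w v ->
          exists v', krel M' a w' v' /\ B v v') /\
      (forall a w w' v', B w w' -> krel M' a w' v' ->
          exists v, krel M a w v /\ B v v') /\
      (forall w w' v, B w w' -> kyest M v w ->
          exists v', kyest M' v' w' /\ B v v') /\
      (forall w w' v', B w w' -> kyest M' v' w' ->
          exists v, kyest M v w /\ B v v').

Definition bisimulation_fun (M M' : kmodel) (f : M -> M') : Prop :=
  bisimulation (fun x y => y = f x).

End YDEL.

From mathcomp Require Import all_boot.

(* An agent arrow out of a flat world (v, flat), and a yesterday arrow into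
   one, stays inside the flat layer, where the arrows are exactly those of M.
   So v |-> (v, flat) is a bisimulation for any precondition predicate. *)

Section FlatCopy.
Variables (Agt : finType) (Letter : Type) (M : kmodel Agt Letter) (n : nat).
Variables (R : Agt -> 'I_n.+1 -> 'I_n.+1 -> Prop) (P : 'I_n.+1 -> M -> Prop).

Definition flat_copy (v : M) : prodM R P :=
  exist (fun x : M * option 'I_n.+1 =>
           match x.2 with None => True | Some t => P t x.1 end) (v, None) I.

Lemma krel_from_flat_copy a v (y : prodM R P) :
  krel a (flat_copy v) y ->
  exists2 v', y = flat_copy v' & krel a v v'.
Proof.
case: y => [[v' [t|]] Hv] /=; first by case.
by case: Hv => Hvv'; exists v'.
Qed.

Lemma kyest_into_flat_copy v (y : prodM R P) :
  kyest y (flat_copy v) ->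
  exists2 v', y = flat_copy v' & kyest v' v.
Proof.
case: y => [[v' [t|]] Hv] /=; first by case.
by case: Hv => Hv'v; exists v'.
Qed.

Lemma flat_copy_bisimulation (w : M) : bisimulation_fun flat_copy.
Proof.
split; first by exists w, (flat_copy w).
split; first by move=> x _ -> p.
split.
  by move=> a x _ v -> Hxv; exists (flat_copy v).
split.
  move=> a x _ y -> /krel_from_flat_copy [v -> Hxv].
  by exists v.
split.
  by move=> x _ v -> Hvx; exists (flat_copy v).
move=> x _ y -> /kyest_into_flat_copy [v -> Hvx].
by exists v.
Qed.

End FlatCopy.

Theorem lemma27 (Agt : finType) (Letter : Type)
  (hAgt : 0 < #|Agt|) (hLetter : inhabited Letter)
  (M : kmodel Agt Letter) (w : M)
  (n : nat) (R : Agt -> 'I_n.+1 -> 'I_n.+1 -> Prop)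
  (pre : 'I_n.+1 -> form Agt Letter) (s : 'I_n.+1) :
  @restricted Agt Letter M ->
  @sat Agt Letter (pre s) M w ->
  @bisimulation_fun Agt Letter M (@update Agt Letter M n R pre) (@flat_world Agt Letter M n R pre).
Proof.
move=> _ _.
exact (@flat_copy_bisimulation _ _ M n R (fun t v => @sat Agt Letter (pre t) M v) w).
Qed.
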